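(* Let $\alpha,\beta,\gamma\in I(d)$ with $\alpha\le\beta\le\gamma$. For every $m\ge1$, the map sending a nonvanishing skew-symmetric notched bitableau $(P,Q)$ on $\bar\beta\times\beta$ with rows $P_1,\dots,P_r$, $Q_1,\dots,Q_r$ to $f_{\theta_1,\beta}\cdots f_{\theta_r,\beta}$, where $\theta_i=P_i\cup(\beta\setminus Q_i)$, is a bijection from the set of degree-$2m$ nonvanishing skew-symmetric notched bitableaux on $\bar\beta\times\beta$ bounded by $T_\alpha,W_\gamma$ onto the set of degree-$m$ standard monomials on $Y^\gamma_{\alpha,\beta}$.
   Context: Notation: $m^*=2d+1-m$; $I(d)$ is the set of $d$-subsets of $\{1,\dots,2d\}$ containing exactly one of $m,m^*$ for each $m$ and having an even number of elements $>d$; $v\le w$ iff $v_i\le w_i$ for sorted entries; $\bar\beta=\{1,\dots,2d\}\setminus\beta$. For $\theta\in I(d)$ with $\theta\setminus\beta=\{r_1<\dots<r_{2s}\}$, $f_{\theta,\beta}$ is the Pfaffian of the skew-symmetric $2s\times2s$ matrix $N$ with $N_{ij}=X_{(r_i,r_j^* )}$ for $i<j$, an element of $P=k[X_{(r,c)}:r\notin\beta,c\in\beta,r<c^*]$; the $\beta$-degree of $\theta$ is $s$. A product $f_{\theta_1,\beta}\cdots f_{\theta_r,\beta}$ ($\theta_i\in I(d)$) is a standard monomial on $Y^\gamma_{\alpha,\beta}$ if $\alpha\le\theta_1\le\dots\le\theta_r\le\gamma$ and each $\theta_i$ satisfies $\theta_i<\beta$ or $\theta_i>\beta$; its degree is the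 sum of the $\beta$-degrees. $T_\alpha$ is any subset of $\bar\beta\times\beta$ whose set of first coordinates is $\alpha\setminus\beta$ and set of second coordinates is $\beta\setminus\alpha$ (each coordinate appearing once); $W_\gamma$ likewise with $\gamma\setminus\beta$, $\beta\setminus\gamma$. Notched bitableaux. A notched bitableau is a pair $(P,Q)$ of arrays of the same shape of finitely many left-justified rows (numbered from top) of positive integers; $P_i,Q_i$ the multisets of row $i$; degree = number of boxes of $P$. Write $A-B\le A'-B'$ if $|A^{\le z}|-|B^{\le z}|\ge|A'^{\le z}|-|B'^{\le z}|$ for all $z$; for $|A|=|B|$ with sorted elements $\lambda_j,\delta_j$, $A-B<\emptyset$ (resp. $>\emptyset$) means $\lambda_j<\delta_j$ (resp. $>$) for all $j$. Semistandard: rows strictly increasing and $P_i-Q_i\le P_{i+1}-Q_{i+1}$; nonvanishing: every row $<\emptyset$ or $>\emptyset$. Skew-symmetric: semistandard, even row lengths, and duality (dual of the entry in row $i$, column $j$ of $P$ (resp. $Q$) is the entry in row $i$, column $k_i+1-j$ of $Q$ (resp. $P$); $x<y\Rightarrow\mathrm{dual}(x)>\mathrm{dual}(y)$, $x=y\Rightarrow\mathrm{dual}(x)=\mathrm{dual}(y)$). On $\bar\beta\times\beta$: entries of $P$ in $\bar\beta$, of $Q$ in $\beta$, each entry plus its dual equal to $2d+1$. For finite $S\subseteq\mathbb N^2$, $S_{(1)},S_{(2)}$ are the multisets of coordinates. $(P,Q)$ with $r$ rows is bounded by $T,W$ if $T_{(1)}-T_{(2)}\le P_1-Q_1$ and $P_r-Q_r\le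 W_{(1)}-W_{(2)}$. *)

From mathcomp Require Import all_boot all_order all_algebra.
Set Implicit Arguments. Unset Strict Implicit. Unset Printing Implicit Defensive.
Import Order.TTheory GRing.Theory Num.Theory.

(* Finite subsets of {1,...,2d} and multisets of positive integers are
   represented by sequences of naturals; sets are strictly increasing. *)

Definition dualn (d m : nat) : nat := (2 * d).+1 - m.

Definition inI (d : nat) (t : seq nat) : bool :=
  [&& sorted ltn t, size t == d, all (fun x => 0 < x <= 2 * d) t,
      all (fun m => (m \in t) != (dualn d m \in t)) (iota 1 (2 * d)) &
      ~~ odd (count (fun x => d < x) t)].

Definition leS (v w : seq nat) : bool := all2 leq (sort leq v) (sort leq w).
Definition ltS (v w : seq nat) : bool := leS v w && (sort leq v != sort leq w).

Definition setdiff (A B : seq nat) : seq nat := [seq x <- A | x \notin B].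
Definition betabar (d : nat) (beta : seq nat) : seq nat :=
  setdiff (iota 1 (2 * d)) beta.

Definition cnt_le (z : nat) (A : seq nat) : nat := count (fun x => x <= z) A.

Definition diff_le (A B A' B' : seq nat) : Prop :=
  forall z : nat,
    ((cnt_le z A')%:Z - (cnt_le z B')%:Z <= (cnt_le z A)%:Z - (cnt_le z B)%:Z)%R.

(* A - B < emptyset, A - B > emptyset  (|A| = |B|, sorted entries) *)
Definition lt_empty (A B : seq nat) : bool := all2 ltn (sort leq A) (sort leq B).
Definition gt_empty (A B : seq nat) : bool :=
  all2 (fun x y => y < x) (sort leq A) (sort leq B).

(* A notched bitableau (P,Q): list of rows (P_i, Q_i), top row first. *)
Definition bitableau := seq (seq nat * seq nat).

Definition tdegree (T : bitableau) : nat := sumn [seq size r.1 | r <- T].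

Definition semistandard (T : bitableau) : Prop :=
  [/\ all (fun r => (size r.1 == size r.2) && (0 < size r.1)) T,
      all (fun r => sorted ltn r.1 && sorted ltn r.2) T &
      forall i, i.+1 < size T ->
        diff_le (nth ([::], [::]) T i).1 (nth ([::], [::]) T i).2
                (nth ([::], [::]) T i.+1).1 (nth ([::], [::]) T i.+1).2].

Definition nonvanishing (T : bitableau) : bool :=
  all (fun r => lt_empty r.1 r.2 || gt_empty r.1 r.2) T.

(* pairs (entry, dual entry): dual of P(i,j) is Q(i,k_i+1-j) and vice versa *)
Definition dual_pairs (T : bitableau) : seq (nat * nat) :=
  flatten [seq let k := size r.1 in
             [seq (nth 0 r.1 j, nth 0 r.2 (k - 1 - j)) | j <- iota 0 k] ++
             [seq (nth 0 r.2 j, nth 0 r.1 (k - 1 - j)) | j <- iota 0 k] | r <- T].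

Definition skew_symmetric (T : bitableau) : Prop :=
  [/\ semistandard T,
      all (fun r => ~~ odd (size r.1)) T &
      forall p q, p \in dual_pairs T -> q \in dual_pairs T ->
        (p.1 < q.1 -> q.2 < p.2) /\ (p.1 = q.1 -> p.2 = q.2)].

Definition skew_symmetric_on (d : nat) (beta : seq nat) (T : bitableau) : Prop :=
  [/\ skew_symmetric T,
      all (fun r => all (fun x => x \in betabar d beta) r.1) T,
      all (fun r => all (fun x => x \in beta) r.2) T &
      all (fun p => p.1 + p.2 == (2 * d).+1) (dual_pairs T)].

(* bounded by T_alpha, W_gamma: (T_alpha)_(1) = alpha \ beta,
   (T_alpha)_(2) = beta \ alpha, and similarly for W_gamma *)
Definition bounded (alpha beta gamma : seq nat) (T : bitableau) : Prop :=
  [/\ 0 < size T,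
      diff_le (setdiff alpha beta) (setdiff beta alpha)
              (head ([::], [::]) T).1 (head ([::], [::]) T).2 &
      diff_le (last ([::], [::]) T).1 (last ([::], [::]) T).2
              (setdiff gamma beta) (setdiff beta gamma)].

Definition theta_of (beta : seq nat) (r : seq nat * seq nat) : seq nat :=
  sort leq (r.1 ++ setdiff beta r.2).

(* the map (P,Q) |-> f_{theta_1,beta} ... f_{theta_r,beta}, with the
   monomial recorded as its sequence of indices theta_1, ..., theta_r *)
Definition tab_to_mon (beta : seq nat) (T : bitableau) : seq (seq nat) :=
  [seq theta_of beta r | r <- T].

(* beta-degree of theta: |theta \ beta| = 2s *)
Definition bdeg (beta theta : seq nat) : nat := (size (setdiff theta beta)) %/ 2.

Definition standard_mon (d : nat) (alpha beta gamma : seq nat) (S : seq (seq nat)) : Prop :=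
  [/\ all (inI d) S,
      path leS alpha (rcons S gamma) &
      all (fun th => ltS th beta || ltS beta th) S].

Definition mdegree (beta : seq nat) (S : seq (seq nat)) : nat :=
  sumn [seq bdeg beta th | th <- S].

Definition tab_set (d m : nat) (alpha beta gamma : seq nat) (T : bitableau) : Prop :=
  [/\ skew_symmetric_on d beta T, nonvanishing T, bounded alpha beta gamma T &
      tdegree T = 2 * m].

Definition mon_set (d m : nat) (alpha beta gamma : seq nat) (S : seq (seq nat)) : Prop :=
  standard_mon d alpha beta gamma S /\ mdegree beta S = m.

(* A row (P, Q) of a skew-symmetric bitableau on the complement of beta times beta
   determines theta = P u (beta \ Q), and is recovered from it as
   (theta \ beta, beta \ theta).  Since Q lists the duals of P, theta is the symmetric
   difference of beta with the duality-closed set P u Q, so it again contains exactly one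
   of m, m^* for every m; evenness of |P| gives the parity condition of I(d).  The identity
   |theta^{<=z}| + |Q^{<=z}| = |P^{<=z}| + |beta^{<=z}| translates the order on I(d) into
   the order P - Q <= P' - Q' on rows: comparisons between consecutive thetas become the
   semistandard condition, comparisons with beta the nonvanishing condition, and
   comparisons with alpha and gamma (themselves thetas of the rows T_alpha, W_gamma) the
   boundedness condition. *)

From mathcomp Require Import all_boot all_order all_algebra zify.
Set Implicit Arguments. Unset Strict Implicit. Unset Printing Implicit Defensive.

Lemma all2_nthP (r : rel nat) s t : size s = size t ->
  reflect (forall i, i < size s -> r (nth 0 s i) (nth 0 t i)) (all2 r s t).
Proof.
elim: s t => [|x s IH] [|y t] //= => [_|[eq_st]]; first by left.
apply: (iffP andP) => [[rxy /(IH _ eq_st) rst] [|i] //= /rst // | rst].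
by split; [exact: (rst 0) | apply/(IH _ eq_st) => i /(rst i.+1)].
Qed.

Lemma all2_flip (r : rel nat) s t : all2 r s t = all2 (fun y x => r x y) t s.
Proof. by elim: s t => [|x s IH] [|y t] //=; rewrite IH. Qed.

Lemma all2_leq_ltn s t : (forall x, x \in s -> x \notin t) -> all2 leq s t = all2 ltn s t.
Proof.
elim: s t => [|x s IH] [|y t] //= st; rewrite ltn_neqAle.
have /norP[/negbTE-> _] : x \notin y :: t by apply: st; rewrite mem_head.
by rewrite IH // => z zs; have := st z; rewrite !inE zs orbT => /(_ isT) /norP[].
Qed.

Lemma all2_leq_cnt_le s t : all2 leq s t -> forall z, cnt_le z t <= cnt_le z s.
Proof.
elim: s t => [|x s IH] [|y t] //= /andP[xy /IH st] z.
by have := st z; rewrite /cnt_le /=; case: (leqP y z); case: (leqP x z); lia.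
Qed.

Lemma sorted_nth_le s z i : sorted leq s -> i < cnt_le z s -> nth 0 s i <= z.
Proof.
elim: s i => [|x s IH] i //= sxs; rewrite /cnt_le /=.
case: i => [|i] /=.
  case: (leqP x z) => //= zx; rewrite -has_count => /hasP[y ys yz].
  by move: sxs; rewrite path_sortedE => [/andP[/allP/(_ y ys)]|]; [lia | exact: leq_trans].
by case: (x <= z) => /= hi; apply: IH (path_sorted sxs) _; rewrite /cnt_le; lia.
Qed.

Lemma sorted_lt_cnt_le_nth s i : sorted leq s -> i < size s -> i < cnt_le (nth 0 s i) s.
Proof.
move=> ss lt_i_s; rewrite /cnt_le -[s in count _ s](cat_take_drop i.+1) count_cat.
suff -> : count (fun x => x <= nth 0 s i) (take i.+1 s) = i.+1 by rewrite leq_addr.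
rewrite -[RHS](size_takel lt_i_s); apply/eqP; rewrite -all_count.
apply/(all_nthP 0) => j; rewrite size_takel // ltnS => le_ji.
rewrite nth_take //; apply: (sorted_leq_nth leq_trans leqnn) => //.
by rewrite inE; exact: leq_ltn_trans lt_i_s.
Qed.

Lemma sorted_all2_leqP s t : sorted leq s -> sorted leq t -> size s = size t ->
  reflect (forall z, cnt_le z t <= cnt_le z s) (all2 leq s t).
Proof.
move=> ss st eq_st; apply: (iffP idP); first exact: all2_leq_cnt_le.
move=> le_cnt; apply/(all2_nthP _ eq_st) => i lt_is.
apply: sorted_nth_le => //; apply: leq_trans (le_cnt _).
by apply: sorted_lt_cnt_le_nth; rewrite -?eq_st.
Qed.

Lemma leS_cnt_leP v w : size v = size w ->
  reflect (forall z, cnt_le z w <= cnt_le z v) (leS v w).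
Proof.
move=> eq_vw; have cnt_sort z s : cnt_le z (sort leq s) = cnt_le z s by exact: count_sort.
have sorted_sort s : sorted leq (sort leq s) by exact: (sort_sorted leq_total).
rewrite /leS; apply: (iffP (sorted_all2_leqP (sorted_sort v) (sorted_sort w) _)).
- by rewrite !size_sort.
- by move=> le_cnt z; have := le_cnt z; rewrite !cnt_sort.
- by move=> le_cnt z; rewrite !cnt_sort.
Qed.

Lemma diff_leE A B A' B' : diff_le A B A' B' <->
  forall z, cnt_le z A' + cnt_le z B <= cnt_le z A + cnt_le z B'.
Proof. by split=> le_AB z; have := le_AB z; lia. Qed.

Lemma sorted_ltn_leq s : sorted ltn s -> sorted leq s.
Proof. by rewrite ltn_sorted_uniq_leq => /andP[]. Qed.

Lemma sort_leq_id s : sorted ltn s -> sort leq s = s.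
Proof. by move/sorted_ltn_leq; apply: (sorted_sort leq_trans). Qed.

Lemma sorted_ltn_sort s : uniq s -> sorted ltn (sort leq s).
Proof. by rewrite ltn_sorted_uniq_leq sort_uniq (sort_sorted leq_total) andbT. Qed.

Lemma mem_setdiff A B x : (x \in setdiff A B) = (x \in A) && (x \notin B).
Proof. by rewrite mem_filter andbC. Qed.

Lemma mem_betabar d beta x : (x \in betabar d beta) = (0 < x <= 2 * d) && (x \notin beta).
Proof. by rewrite mem_setdiff mem_iota; congr (_ && _); lia. Qed.

Lemma count_setdiff (p : pred nat) B Q : uniq B -> uniq Q -> {subset Q <= B} ->
  count p (setdiff B Q) + count p Q = count p B.
Proof.
move=> uB uQ QB; rewrite -[in RHS](permP (permEl (perm_filterC (mem Q) B)) p).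
rewrite count_cat addnC; congr (_ + _); apply/permP/uniq_perm; rewrite ?filter_uniq // => x.
by rewrite mem_filter andb_idr //; apply: QB.
Qed.

Definition row_of (beta th : seq nat) : seq nat * seq nat := (setdiff th beta, setdiff beta th).

Lemma count_theta (p : pred nat) beta r : uniq beta -> uniq r.2 -> {subset r.2 <= beta} ->
  count p (theta_of beta r) + count p r.2 = count p r.1 + count p beta.
Proof. by move=> ub u2 sub2; rewrite count_sort count_cat -addnA count_setdiff. Qed.

Lemma theta_of_rowK beta th : uniq beta -> sorted ltn th -> theta_of beta (row_of beta th) = th.
Proof.
move=> ub sth; rewrite /theta_of /=; apply: (irr_sorted_eq ltn_trans ltnn) => //.
  rewrite sorted_ltn_sort // cat_uniq !filter_uniq ?(sorted_uniq ltn_trans ltnn sth) //= andbT.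
  by apply/hasPn => x; rewrite !mem_setdiff; case: (x \in beta); rewrite ?andbF.
by move=> x; rewrite mem_sort mem_cat !mem_setdiff; case: (x \in th); case: (x \in beta).
Qed.

Lemma theta_of_nil beta : sorted ltn beta -> theta_of beta ([::], [::]) = beta.
Proof. by move=> sb; rewrite /theta_of /setdiff filter_predT sort_leq_id. Qed.

Lemma dualnK d m : m <= (2 * d).+1 -> dualn d (dualn d m) = m.
Proof. by move=> le_m; rewrite /dualn subKn. Qed.

Lemma dualn_range d m : 0 < m <= 2 * d -> 0 < dualn d m <= 2 * d.
Proof. rewrite /dualn; lia. Qed.

Section IndexSets.
Variables (d : nat) (t : seq nat).
Hypothesis t_inI : inI d t.

Lemma inI_sorted : sorted ltn t.
Proof. by case/and5P: t_inI. Qed.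

Lemma inI_uniq : uniq t.
Proof. exact: (sorted_uniq ltn_trans ltnn inI_sorted). Qed.

Lemma inI_size : size t = d.
Proof. by case/and5P: t_inI => _ /eqP. Qed.

Lemma inI_range x : x \in t -> 0 < x <= 2 * d.
Proof. by case/and5P: t_inI => _ _ /allP range _ _ /range. Qed.

Lemma inI_even : ~~ odd (count (fun x => d < x) t).
Proof. by case/and5P: t_inI. Qed.

Lemma inI_dualn m : 0 < m <= 2 * d -> (dualn d m \in t) = (m \notin t).
Proof.
case/and5P: t_inI => _ _ _ /allP pairs _ range_m.
have /pairs : m \in iota 1 (2 * d) by rewrite mem_iota; lia.
by case: (m \in t); case: (_ \in t).
Qed.

End IndexSets.

Lemma mem_rev_map_dualn d P x : (forall y, y \in P -> 0 < y <= 2 * d) ->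
  (x \in rev (map (dualn d) P)) = (0 < x <= 2 * d) && (dualn d x \in P).
Proof.
move=> range_P; rewrite mem_rev; apply/mapP/andP => [[y yP ->]|[range_x xP]].
  have range_y := range_P y yP; rewrite dualnK ?dualn_range //; lia.
by exists (dualn d x); rewrite ?dualnK //; lia.
Qed.

Lemma sorted_rev_map_dualn d P : (forall y, y \in P -> 0 < y <= 2 * d) ->
  sorted ltn P -> sorted ltn (rev (map (dualn d) P)).
Proof.
move=> range_P sP; rewrite rev_sorted sorted_map.
apply: (sub_in_sorted (P := fun y => 0 < y <= 2 * d) _ _ sP); last exact/allP.
by move=> x y /= range_x range_y; rewrite /dualn; lia.
Qed.

Lemma rev_map_dualnP d (P Q : seq nat) :
  size Q = size P -> (forall x, x \in P -> x <= (2 * d).+1) ->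
  (forall j, j < size P -> nth 0 P j + nth 0 Q (size P - 1 - j) = (2 * d).+1) <->
  Q = rev (map (dualn d) P).
Proof.
move=> eq_size le_P; split=> [sum_PQ | -> j lt_j].
  apply: (@eq_from_nth _ 0); first by rewrite size_rev size_map.
  move=> i; rewrite eq_size => lt_i.
  rewrite nth_rev size_map // (nth_map 0); last lia.
  have -> : size P - i.+1 = size P - 1 - i by lia.
  have := sum_PQ (size P - 1 - i) ltac:(lia).
  have -> : size P - 1 - (size P - 1 - i) = i by lia.
  by rewrite /dualn => <-; rewrite addKn.
rewrite nth_rev size_map; last lia.
rewrite (nth_map 0); last lia.
have -> : size P - (size P - 1 - j).+1 = j by lia.
by rewrite /dualn subnKC // le_P // mem_nth.
Qed.

Definition diff_chain (T : bitableau) : Prop :=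
  forall i, i.+1 < size T ->
    diff_le (nth ([::], [::]) T i).1 (nth ([::], [::]) T i).2
            (nth ([::], [::]) T i.+1).1 (nth ([::], [::]) T i.+1).2.

Lemma path_rcons_cons (X : Type) (e : rel X) a b x s :
  path e a (rcons (x :: s) b) = [&& e a x, sorted e (x :: s) & e (last x s) b].
Proof. by rewrite rcons_path /= andbA. Qed.

Lemma mem_dual_pairs_fst T r j : r \in T -> j < size r.1 ->
  (nth 0 r.1 j, nth 0 r.2 (size r.1 - 1 - j)) \in dual_pairs T.
Proof.
move=> rT lt_j; apply/flattenP; eexists; first by apply/mapP; exists r.
by rewrite /= mem_cat; apply/orP; left; apply/map_f; rewrite mem_iota.
Qed.

Section Rows.
Variables (d : nat) (beta : seq nat).
Hypothesis beta_inI : inI d beta.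

Definition dual_row (r : seq nat * seq nat) : Prop :=
  [/\ sorted ltn r.1, {subset r.1 <= betabar d beta} & r.2 = rev (map (dualn d) r.1)].

Definition skew_row (r : seq nat * seq nat) : Prop :=
  [/\ dual_row r, 0 < size r.1 & ~~ odd (size r.1)].

Section DualRow.
Variable r : seq nat * seq nat.
Hypothesis r_dual : dual_row r.

Lemma dual_row_fst x : x \in r.1 -> (0 < x <= 2 * d) && (x \notin beta).
Proof. by case: r_dual => _ sub _ /sub; rewrite mem_betabar. Qed.

Lemma dual_row_range x : x \in r.1 -> 0 < x <= 2 * d.
Proof. by case/dual_row_fst/andP. Qed.

Lemma mem_dual_row_snd x : (x \in r.2) = (0 < x <= 2 * d) && (dualn d x \in r.1).
Proof. by case: r_dual => _ _ ->; apply: mem_rev_map_dualn; exact: dual_row_range. Qed.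

Lemma mem_dual_row_dualn x : 0 < x <= 2 * d ->
  (dualn d x \in r.1) || (dualn d x \in r.2) = (x \in r.1) || (x \in r.2).
Proof.
move=> range_x; rewrite !mem_dual_row_snd dualnK ?dualn_range ?range_x //=; last lia.
by rewrite orbC.
Qed.

Lemma dual_row_snd_sub : {subset r.2 <= beta}.
Proof.
move=> x; rewrite mem_dual_row_snd => /andP[range_x /dual_row_fst/andP[_]].
by rewrite (inI_dualn beta_inI range_x) negbK.
Qed.

Lemma dual_row_snd_sorted : sorted ltn r.2.
Proof. by case: r_dual => s1 _ ->; apply: sorted_rev_map_dualn dual_row_range s1. Qed.

Lemma size_dual_row_snd : size r.2 = size r.1.
Proof. by case: r_dual => _ _ ->; rewrite size_rev size_map. Qed.

Lemma count_theta_dual_row (p : pred nat) :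
  count p (theta_of beta r) + count p r.2 = count p r.1 + count p beta.
Proof.
apply: count_theta (inI_uniq beta_inI) _ dual_row_snd_sub.
exact: (sorted_uniq ltn_trans ltnn dual_row_snd_sorted).
Qed.

Lemma size_theta_dual_row : size (theta_of beta r) = d.
Proof.
have := count_theta_dual_row predT.
by rewrite !count_predT size_dual_row_snd (inI_size beta_inI) addnC => /addnI.
Qed.

Lemma mem_theta_dual_row x :
  (x \in theta_of beta r) = (x \in beta) (+) ((x \in r.1) || (x \in r.2)).
Proof.
rewrite mem_sort mem_cat mem_setdiff.
case x1: (x \in r.1); first by have /andP[_ /negbTE->] := dual_row_fst x1.
by case x2: (x \in r.2) => /=; [rewrite (dual_row_snd_sub x2) | rewrite andbT addbF].
Qed.

Lemma theta_sorted : sorted ltn (theta_of beta r).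
Proof.
rewrite sorted_ltn_sort // cat_uniq filter_uniq ?(inI_uniq beta_inI) // andbT.
case: r_dual => s1 _ _; rewrite (sorted_uniq ltn_trans ltnn s1) /=.
apply/hasPn => x; rewrite mem_setdiff => /andP[xb _].
by apply/negP => /dual_row_fst; rewrite xb andbF.
Qed.

(* The elements of [r.2] are the duals of those of [r.1], and duality swaps [> d] with [<= d]. *)
Lemma odd_count_theta : odd (count (fun x => d < x) (theta_of beta r)) = odd (size r.1).
Proof.
have count_snd : count (fun x => d < x) r.2 = count (predC (fun x => d < x)) r.1.
  case: r_dual => _ _ ->; rewrite count_rev count_map.
  by apply: eq_in_count => x /dual_row_range; rewrite /= /dualn; lia.
have := count_theta_dual_row (fun x => d < x).
rewrite count_snd -(count_predC (fun x => d < x) r.1) => /(congr1 odd).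
rewrite !oddD (negbTE (inI_even beta_inI)) addbF => <-.
by rewrite -addbA addbb addbF.
Qed.

Lemma row_of_thetaK : row_of beta (theta_of beta r) = r.
Proof.
have [s1 _ _] := r_dual; have s2 := dual_row_snd_sorted.
have fst_notin x : x \in r.1 -> x \notin beta by case/dual_row_fst/andP.
transitivity (r.1, r.2); last by case: (r).
congr pair; apply: (@irr_sorted_eq _ ltn ltn_trans ltnn) => // [|x].
- exact: (sorted_filter ltn_trans _ theta_sorted).
- rewrite mem_setdiff mem_theta_dual_row; case xb: (x \in beta); rewrite ?andbF ?andbT.
    by apply/esym/negbTE/negP => /fst_notin; rewrite xb.
  case x2: (x \in r.2); last by rewrite orbF.
  by rewrite (dual_row_snd_sub x2) in xb.
- exact: (sorted_filter ltn_trans _ (inI_sorted beta_inI)).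
- rewrite mem_setdiff mem_theta_dual_row; case xb: (x \in beta) => /=; last first.
    by apply/esym/negbTE/negP => /dual_row_snd_sub; rewrite xb.
  by rewrite negbK; case x1: (x \in r.1) => //=; move: (fst_notin _ x1); rewrite xb.
Qed.

End DualRow.

Lemma row_of_dual th : inI d th -> dual_row (row_of beta th).
Proof.
move=> th_inI; have sth := inI_sorted th_inI.
have range_P y : y \in setdiff th beta -> 0 < y <= 2 * d.
  by rewrite mem_setdiff => /andP[/(inI_range th_inI)].
split=> /=.
- exact: (sorted_filter ltn_trans _ sth).
- by move=> x; rewrite mem_betabar mem_setdiff => /andP[/(inI_range th_inI)-> ->].
apply: (@irr_sorted_eq _ ltn ltn_trans ltnn).
- exact: (sorted_filter ltn_trans _ (inI_sorted beta_inI)).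
- exact: (sorted_rev_map_dualn range_P (sorted_filter ltn_trans _ sth)).
move=> x; rewrite (mem_rev_map_dualn _ range_P) !mem_setdiff.
have [range_x | out_x] := boolP (0 < x <= 2 * d).
  by rewrite (inI_dualn th_inI range_x) (inI_dualn beta_inI range_x) negbK andbC.
apply/negbTE/negP => /andP[/(inI_range beta_inI) range_x _].
by rewrite range_x in out_x.
Qed.

Lemma row_of_skew th : inI d th -> th != beta -> skew_row (row_of beta th).
Proof.
move=> th_inI; have rd := row_of_dual th_inI.
have thK := theta_of_rowK (inI_uniq beta_inI) (inI_sorted th_inI).
move=> th_neq; split=> //; last by rewrite -(odd_count_theta rd) thK (inI_even th_inI).
rewrite lt0n size_eq0; apply: contra th_neq => /eqP P0.
have Q0 : (row_of beta th).2 = [::] by apply: size0nil; rewrite (size_dual_row_snd rd) P0.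
by rewrite -thK [row_of beta th]surjective_pairing P0 Q0 theta_of_nil ?(inI_sorted beta_inI).
Qed.

Lemma theta_inI r : skew_row r -> inI d (theta_of beta r).
Proof.
case=> rd _ even_r; apply/and5P; split.
- exact: theta_sorted rd.
- by rewrite (size_theta_dual_row rd).
- apply/allP => x; rewrite mem_sort mem_cat mem_setdiff.
  by case/orP=> [/(dual_row_range rd) | /andP[/(inI_range beta_inI)]].
- apply/allP => m; rewrite mem_iota => range_m; have {}range_m : 0 < m <= 2 * d by lia.
  rewrite !(mem_theta_dual_row rd) (inI_dualn beta_inI range_m).
  by rewrite (mem_dual_row_dualn rd range_m); case: (m \in beta); case: (_ || _).
- by rewrite (odd_count_theta rd).
Qed.

Lemma leS_theta_diff_le r1 r2 : dual_row r1 -> dual_row r2 ->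
  leS (theta_of beta r1) (theta_of beta r2) <-> diff_le r1.1 r1.2 r2.1 r2.2.
Proof.
move=> rd1 rd2; rewrite diff_leE.
have eq_size : size (theta_of beta r1) = size (theta_of beta r2).
  by rewrite !size_theta_dual_row.
have cnt1 z := count_theta_dual_row rd1 (fun x => x <= z).
have cnt2 z := count_theta_dual_row rd2 (fun x => x <= z).
split=> [/(leS_cnt_leP eq_size) le_cnt z | le_cnt]; last apply/(leS_cnt_leP eq_size) => z.
  by have := le_cnt z; have := cnt1 z; have := cnt2 z; rewrite /cnt_le; lia.
by have := le_cnt z; have := cnt1 z; have := cnt2 z; rewrite /cnt_le; lia.
Qed.

Lemma leS_inI_theta th r : inI d th -> dual_row r ->
  leS th (theta_of beta r) <-> diff_le (setdiff th beta) (setdiff beta th) r.1 r.2.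
Proof.
move=> th_inI rd.
rewrite -{1}(theta_of_rowK (inI_uniq beta_inI) (inI_sorted th_inI)).
exact: leS_theta_diff_le (row_of_dual th_inI) rd.
Qed.

Lemma leS_theta_inI th r : inI d th -> dual_row r ->
  leS (theta_of beta r) th <-> diff_le r.1 r.2 (setdiff th beta) (setdiff beta th).
Proof.
move=> th_inI rd.
rewrite -{1}(theta_of_rowK (inI_uniq beta_inI) (inI_sorted th_inI)).
exact: leS_theta_diff_le rd (row_of_dual th_inI).
Qed.

Lemma leS_theta_beta r : dual_row r -> leS (theta_of beta r) beta = all2 leq r.1 r.2.
Proof.
move=> rd; have [s1 _ _] := rd; have s2 := dual_row_snd_sorted rd.
have cnt z := count_theta_dual_row rd (fun x => x <= z).
have eq_size : size (theta_of beta r) = size beta.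
  by rewrite size_theta_dual_row // (inI_size beta_inI).
have eq_size_r := esym (size_dual_row_snd rd).
apply/(leS_cnt_leP eq_size)/(sorted_all2_leqP (sorted_ltn_leq s1) (sorted_ltn_leq s2) eq_size_r);
  by move=> le_cnt z; have := le_cnt z; have := cnt z; rewrite /cnt_le; lia.
Qed.

Lemma leS_beta_theta r : dual_row r -> leS beta (theta_of beta r) = all2 leq r.2 r.1.
Proof.
move=> rd; have [s1 _ _] := rd; have s2 := dual_row_snd_sorted rd.
have cnt z := count_theta_dual_row rd (fun x => x <= z).
have eq_size : size beta = size (theta_of beta r).
  by rewrite size_theta_dual_row // (inI_size beta_inI).
have eq_size_r := size_dual_row_snd rd.
apply/(leS_cnt_leP eq_size)/(sorted_all2_leqP (sorted_ltn_leq s2) (sorted_ltn_leq s1) eq_size_r);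
  by move=> le_cnt z; have := le_cnt z; have := cnt z; rewrite /cnt_le; lia.
Qed.

Lemma theta_neq_beta r : skew_row r -> theta_of beta r != beta.
Proof.
case=> rd size_r _; have x1 := mem_nth 0 size_r.
have : nth 0 r.1 0 \in theta_of beta r by rewrite mem_sort mem_cat x1.
by apply: contraTneq => ->; have /andP[_ /negbTE->] := dual_row_fst rd x1.
Qed.

Lemma dual_row_disjoint r x : dual_row r -> x \in r.1 -> x \notin r.2.
Proof.
by move=> rd /(dual_row_fst rd)/andP[_]; apply: contra; apply: dual_row_snd_sub.
Qed.

Lemma ltS_theta_beta r : skew_row r -> ltS (theta_of beta r) beta = lt_empty r.1 r.2.
Proof.
move=> sr; have [rd _ _] := sr; have [s1 _ _] := rd.
rewrite /ltS /lt_empty leS_theta_beta // (sort_leq_id (theta_sorted rd)).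
rewrite (sort_leq_id (inI_sorted beta_inI)) (sort_leq_id s1) (sort_leq_id (dual_row_snd_sorted rd)).
by rewrite (theta_neq_beta sr) andbT; apply: all2_leq_ltn => x; apply: dual_row_disjoint.
Qed.

Lemma ltS_beta_theta r : skew_row r -> ltS beta (theta_of beta r) = gt_empty r.1 r.2.
Proof.
move=> sr; have [rd _ _] := sr; have [s1 _ _] := rd.
rewrite /ltS /gt_empty leS_beta_theta // (sort_leq_id (theta_sorted rd)).
rewrite (sort_leq_id (inI_sorted beta_inI)) (sort_leq_id s1) (sort_leq_id (dual_row_snd_sorted rd)).
rewrite eq_sym (theta_neq_beta sr) andbT [RHS]all2_flip; apply: all2_leq_ltn => x x2.
by apply: contraL x2; apply: dual_row_disjoint.
Qed.

Lemma bdeg_theta r : dual_row r -> bdeg beta (theta_of beta r) = size r.1 %/ 2.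
Proof. by move=> rd; rewrite /bdeg -[setdiff _ _]/((row_of beta _).1) row_of_thetaK. Qed.

Lemma dual_pairs_sum T : (forall r, r \in T -> dual_row r) ->
  all (fun p => p.1 + p.2 == (2 * d).+1) (dual_pairs T).
Proof.
move=> rows; apply/allP => p /flattenP[s /mapP[r rT ->]].
have rd := rows r rT; have [_ _ eq2] := rd.
have le_fst x : x \in r.1 -> x <= (2 * d).+1 by move/(dual_row_range rd); lia.
have sum_r := (rev_map_dualnP (size_dual_row_snd rd) le_fst).2 eq2.
rewrite mem_cat => /orP[] /mapP[j]; rewrite mem_iota add0n => /andP[_ lt_j] -> /=.
  by rewrite sum_r.
have revK i : i < size r.1 -> size r.1 - 1 - (size r.1 - 1 - i) = i by lia.
have rev_lt i : i < size r.1 -> size r.1 - 1 - i < size r.1 by lia.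
by have := sum_r _ (rev_lt _ lt_j); rewrite revK // addnC => ->.
Qed.

Lemma skew_symmetric_onP T : skew_symmetric_on d beta T <->
  (forall r, r \in T -> skew_row r) /\ diff_chain T.
Proof.
split=> [|[rows chain]].
  case=> [[[/allP sizes /allP sorts chain] /allP evens _] /allP in_betabar _ /allP sums].
  split=> // r rT; have /andP[/eqP eq_size pos] := sizes r rT.
  have /andP[s1 _] := sorts r rT; split=> //; last exact: evens.
  have sub1 : {subset r.1 <= betabar d beta} by move=> x; apply/allP/in_betabar.
  split=> //; apply/(rev_map_dualnP (esym eq_size)).
    by move=> x /sub1; rewrite mem_betabar; lia.
  by move=> j lt_j; apply/eqP; exact: (sums _ (mem_dual_pairs_fst rT lt_j)).
have duals r : r \in T -> dual_row r by case/rows.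
have sums := dual_pairs_sum duals.
split; first split; first split.
- apply/allP => r /rows[rd pos _]; by rewrite (size_dual_row_snd rd) eqxx pos.
- apply/allP => r /rows[rd _ _]; have [s1 _ _] := rd; by rewrite s1 (dual_row_snd_sorted rd).
- exact: chain.
- by apply/allP => r /rows[].
- have anti (a b c e : nat) : a + b = (2 * d).+1 -> c + e = (2 * d).+1 ->
      (a < c -> e < b) /\ (a = c -> b = e) by lia.
  by move=> p q /(allP sums)/eqP + /(allP sums)/eqP; apply: anti.
- by apply/allP => r /duals[_ sub1 _]; apply/allP.
- by apply/allP => r /duals rd; apply/allP => x /(dual_row_snd_sub rd).
- exact: sums.
Qed.

Lemma sorted_tab_to_monP T : (forall r, r \in T -> dual_row r) ->
  sorted leS (tab_to_mon beta T) <-> diff_chain T.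
Proof.
move=> rows.
have nth_mon i : i < size T ->
    nth [::] (tab_to_mon beta T) i = theta_of beta (nth ([::], [::]) T i).
  by move=> lt_i; rewrite (nth_map ([::], [::])).
have row i : i < size T -> dual_row (nth ([::], [::]) T i) by move=> lt_i; apply/rows/mem_nth.
split=> [/(sortedP [::]) sorted_mon i lt_i | chain].
  have lt_i' := ltnW lt_i; apply/(leS_theta_diff_le (row _ lt_i') (row _ lt_i)).
  by rewrite -!nth_mon //; apply: sorted_mon; rewrite size_map.
apply/(sortedP [::]) => i; rewrite size_map => lt_i; have lt_i' := ltnW lt_i.
by rewrite !nth_mon //; apply/(leS_theta_diff_le (row _ lt_i') (row _ lt_i))/chain.
Qed.

Lemma nonvanishing_tab_to_mon T : (forall r, r \in T -> skew_row r) ->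
  all (fun th => ltS th beta || ltS beta th) (tab_to_mon beta T) = nonvanishing T.
Proof.
move=> rows; rewrite all_map; apply: eq_in_all => r /rows sr /=.
by rewrite ltS_theta_beta // ltS_beta_theta.
Qed.

Lemma tdegree_tab_to_mon T : (forall r, r \in T -> skew_row r) ->
  tdegree T = 2 * mdegree beta (tab_to_mon beta T).
Proof.
rewrite /tdegree /mdegree /tab_to_mon; elim: T => [|r T IH] //= rows.
rewrite mulnDr -IH => [|r' r'T]; last by apply: rows; rewrite in_cons r'T orbT.
have [rd _ even_r] := rows r (mem_head r T).
by rewrite (bdeg_theta rd) mulnC divnK // dvdn2.
Qed.

Lemma tab_to_monK T : (forall r, r \in T -> dual_row r) ->
  map (row_of beta) (tab_to_mon beta T) = T.
Proof.
move=> rows; rewrite /tab_to_mon -map_comp -[RHS]map_id; apply/eq_in_map => r /rows rd /=.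
exact: row_of_thetaK.
Qed.

Lemma mon_of_rowsK S : all (inI d) S -> tab_to_mon beta (map (row_of beta) S) = S.
Proof.
move=> /allP S_inI; rewrite /tab_to_mon -map_comp -[RHS]map_id.
apply/eq_in_map => th /S_inI th_inI /=; exact: theta_of_rowK (inI_uniq beta_inI) (inI_sorted th_inI).
Qed.

Section Bounds.
Variables alpha gamma : seq nat.
Hypotheses (alpha_inI : inI d alpha) (gamma_inI : inI d gamma).

Lemma standard_mon_tabP T : T != [::] -> (forall r, r \in T -> skew_row r) ->
  standard_mon d alpha beta gamma (tab_to_mon beta T) <->
  [/\ nonvanishing T, diff_chain T & bounded alpha beta gamma T].
Proof.
case: T => [//|r T] _ rows.
have duals r' : r' \in r :: T -> dual_row r' by case/rows.
have [rd _ _] := rows r (mem_head r T).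
have last_rd : dual_row (last r T) by apply/duals; rewrite mem_last.
have all_inI : all (inI d) (tab_to_mon beta (r :: T)).
  by apply/allP => _ /mapP[r' /rows sr ->]; exact: theta_inI.
rewrite /standard_mon all_inI nonvanishing_tab_to_mon //.
rewrite /tab_to_mon map_cons path_rcons_cons -map_cons last_map.
split=> [[_ /and3P[le_alpha sorted_mon le_gamma] nv] | [nv chain [_ bd_alpha bd_gamma]]].
  split=> //; first exact/(sorted_tab_to_monP duals).
  by split=> //; [exact/(leS_inI_theta alpha_inI rd) | exact/(leS_theta_inI gamma_inI last_rd)].
split=> //; apply/and3P; split.
- exact/(leS_inI_theta alpha_inI rd).
- exact/(sorted_tab_to_monP duals).
- exact/(leS_theta_inI gamma_inI last_rd).
Qed.

Lemma tab_set_mon_set m T : 0 < m -> (forall r, r \in T -> skew_row r) ->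
  tab_set d m alpha beta gamma T <-> mon_set d m alpha beta gamma (tab_to_mon beta T).
Proof.
move=> m_gt0 rows; have [-> | T_ne] := eqVneq T [::].
  by split=> [[_ _ []] | [_ m0]] //; move: m_gt0; rewrite -m0.
rewrite /tab_set /mon_set (tdegree_tab_to_mon rows).
split=> [[/skew_symmetric_onP[_ chain] nv bd deg] |
         [/(standard_mon_tabP T_ne rows)[nv chain bd] deg]].
  by split; [exact/(standard_mon_tabP T_ne rows) | lia].
by split=> //; [exact/skew_symmetric_onP | lia].
Qed.

End Bounds.

End Rows.

Unset Implicit Arguments.

Theorem lemma8p2 (d : nat) (alpha beta gamma : seq nat) :
  inI d alpha -> inI d beta -> inI d gamma ->
  leS alpha beta -> leS beta gamma ->
  forall m : nat, 0 < m ->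
  [/\ (forall T, tab_set d m alpha beta gamma T ->
                 mon_set d m alpha beta gamma (tab_to_mon beta T)),
      (forall T1 T2, tab_set d m alpha beta gamma T1 ->
                     tab_set d m alpha beta gamma T2 ->
                     tab_to_mon beta T1 = tab_to_mon beta T2 -> T1 = T2) &
      (forall S, mon_set d m alpha beta gamma S ->
                 exists2 T, tab_set d m alpha beta gamma T & tab_to_mon beta T = S)].
Proof.
move=> alpha_inI beta_inI gamma_inI _ _ m m_gt0.
have tab_setE := tab_set_mon_set beta_inI alpha_inI gamma_inI m_gt0.
have tab_rows T : tab_set d m alpha beta gamma T -> forall r, r \in T -> skew_row d beta r.
  by case=> /(skew_symmetric_onP beta_inI)[].
have tab_duals T : tab_set d m alpha beta gamma T -> forall r, r \in T -> dual_row d beta r.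
  by move=> /tab_rows rows r /rows[].
split.
- by move=> T tabT; apply/(tab_setE _ (tab_rows T tabT)).
- move=> T1 T2 /tab_duals rows1 /tab_duals rows2 eq_mon.
  by rewrite -(tab_to_monK beta_inI rows1) eq_mon (tab_to_monK beta_inI rows2).
- move=> S monS; have [[S_inI _ S_nv] _] := monS.
  have rows r : r \in map (row_of beta) S -> skew_row d beta r.
    case/mapP=> th thS ->; apply: (row_of_skew beta_inI (allP S_inI _ thS)).
    have := allP S_nv _ thS; apply: contraTneq => ->; by rewrite /ltS eqxx !andbF.
  exists (map (row_of beta) S); last exact: (mon_of_rowsK beta_inI S_inI).
  by apply/(tab_setE _ rows); rewrite (mon_of_rowsK beta_inI S_inI).
Qed.
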